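(* For all $\mathbf u\in C^3(\overline{\mathbb{B}^3})\times C^2(\overline{\mathbb{B}^3})$, \[ \operatorname{Re}(\tilde{\mathbf L}\mathbf u|\mathbf u)_3\le-\tfrac2{p-1}(\mathbf u|\mathbf u)_3. \]
   Context: Fix $p>3$. $\mathbb{B}^3$ is the open unit ball in $\mathbb{R}^3$, $\mathbb{S}^2=\partial\mathbb{B}^3$ with surface measure $\sigma$; repeated latin indices are summed from 1 to 3; functions are complex-valued. For $\mathbf u,\mathbf v\in C^2(\overline{\mathbb{B}^3})\times C^1(\overline{\mathbb{B}^3})$, $(\mathbf u|\mathbf v)_3=\int_{\mathbb{S}^2}[\omega^j\partial_ju_1+u_1+u_2](\omega)d\sigma(\omega)\int_{\mathbb{S}^2}\overline{[\omega^j\partial_jv_1+v_1+v_2](\omega)}d\sigma(\omega)$. For $\mathbf u\in C^3(\overline{\mathbb{B}^3})\times C^2(\overline{\mathbb{B}^3})$, $\tilde{\mathbf L}\mathbf u(\xi)=\big(-\xi^j\partial_ju_1(\xi)-\frac2{p-1}u_1(\xi)+u_2(\xi),\ \partial^j\partial_ju_1(\xi)-\xi^j\partial_ju_2(\xi)-\frac{p+1}{p-1}u_2(\xi)\big)$. *)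

From Stdlib Require Import Reals.
From Coquelicot Require Import Coquelicot.
Open Scope R_scope.

(* Points of R^3, written ((x1, x2), x3). Coordinates indexed by j = 0,1,2
   (standing for the paper's indices 1,2,3). *)
Definition R3 := (R * R * R)%type.

Definition coord (x : R3) (j : nat) : R :=
  match j with
  | O => fst (fst x)
  | 1%nat => snd (fst x)
  | _ => snd x
  end.

Definition shift (x : R3) (j : nat) (t : R) : R3 :=
  match j with
  | O => ((fst (fst x) + t, snd (fst x)), snd x)
  | 1%nat => ((fst (fst x), snd (fst x) + t), snd x)
  | _ => ((fst (fst x), snd (fst x)), snd x + t)
  end.

Definition ex_partial (f : R3 -> C) (j : nat) (x : R3) : Prop :=
  ex_derive (fun t => Re (f (shift x j t))) 0 /\
  ex_derive (fun t => Im (f (shift x j t))) 0.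

Definition partial (f : R3 -> C) (j : nat) (x : R3) : C :=
  (Derive (fun t => Re (f (shift x j t))) 0,
   Derive (fun t => Im (f (shift x j t))) 0).

Fixpoint Ck (k : nat) (U : R3 -> Prop) (f : R3 -> C) : Prop :=
  (forall x, U x -> continuous f x) /\
  match k with
  | O => True
  | S k' => (forall j x, (j < 3)%nat -> U x -> ex_partial f j x) /\
            (forall j, (j < 3)%nat -> Ck k' U (partial f j))
  end.

Definition cball (x : R3) : Prop :=
  coord x 0 ^ 2 + coord x 1 ^ 2 + coord x 2 ^ 2 <= 1.

(* C^k(closed unit ball): C^k on some open neighbourhood of the closed ball *)
Definition Ck_cball (k : nat) (f : R3 -> C) : Prop :=
  exists U : R3 -> Prop, open U /\ (forall x, cball x -> U x) /\ Ck k U f.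

Definition sum3 (g : nat -> C) : C := Cplus (Cplus (g 0%nat) (g 1%nat)) (g 2%nat).

(* Integral over S^2 with respect to the surface measure, via spherical
   coordinates: d sigma = sin(theta) d theta d phi. *)
Definition sph (th ph : R) : R3 :=
  ((sin th * cos ph, sin th * sin ph), cos th).

Definition sphere_int (g : R3 -> C) : C :=
  @RInt C_R_CompleteNormedModule
    (fun th => @RInt C_R_CompleteNormedModule
                 (fun ph => Cmult (RtoC (sin th)) (g (sph th ph))) 0 (2 * PI)) 0 PI.

Definition pair3 := ((R3 -> C) * (R3 -> C))%type.

Definition bdry (u : pair3) (w : R3) : C :=
  Cplus (Cplus (sum3 (fun j => Cmult (RtoC (coord w j)) (partial (fst u) j w)))
               (fst u w)) (snd u w).

Definition ip3 (u v : pair3) : C :=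
  Cmult (sphere_int (bdry u)) (Cconj (sphere_int (bdry v))).

Definition Ltilde (p : R) (u : pair3) : pair3 :=
  (fun xi =>
     Cplus (Cminus (Copp (sum3 (fun j => Cmult (RtoC (coord xi j)) (partial (fst u) j xi))))
                   (Cmult (RtoC (2 / (p - 1))) (fst u xi)))
           (snd u xi),
   fun xi =>
     Cminus (Cminus (sum3 (fun j => partial (partial (fst u) j) j xi))
                    (sum3 (fun j => Cmult (RtoC (coord xi j)) (partial (snd u) j xi))))
            (Cmult (RtoC ((p + 1) / (p - 1))) (snd u xi))).

(* On the unit sphere the boundary functional of L~u is, pointwise,
     w^j d_j (L~u)_1 + (L~u)_1 + (L~u)_2 = Lap_S u_1 - 2/(p-1) (w^j d_j u_1 + u_1 + u_2),
   where Lap_S u_1 = Delta u_1 - w^j w^k d_j d_k u_1 - 2 w^j d_j u_1 is the Laplace-Beltrami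
   operator of u_1 on S^2 (the u_2-terms combine because 1 - (p+1)/(p-1) = -2/(p-1)).
   Lap_S u_1 has zero mean on S^2: in spherical coordinates
     sin^2 th Lap_S u = sin th d_th (sin th d_th u) + d_ph^2 u,
   the ph-integral of d_ph^2 u vanishes by periodicity and the th-integral of
   d_th (sin th d_th u) because sin vanishes at the poles.  Hence the sphere integral of the
   boundary functional of L~u is -2/(p-1) times that of u, and (L~u|u)_3 = -2/(p-1) (u|u)_3:
   the inequality holds with equality.  The chain rule for u o (spherical coordinates) comes from
   the continuity of the partial derivatives, via the mean value theorem on each coordinate. *)

From Stdlib Require Import Reals Lra Lia Nsatz FunctionalExtensionality.
From Coquelicot Require Import Coquelicot.
Open Scope R_scope.

Lemma ball_R (a b e : R) : ball a e b <-> Rabs (b - a) < e.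
Proof. unfold ball; simpl; unfold AbsRing_ball, abs, minus, plus, opp; simpl. tauto. Qed.

Lemma ball_R3 (x0 x1 x2 y0 y1 y2 e : R) :
  ball (((x0, x1), x2) : R3) e ((y0, y1), y2) <->
  Rabs (y0 - x0) < e /\ Rabs (y1 - x1) < e /\ Rabs (y2 - x2) < e.
Proof.
  change ((ball x0 e y0 /\ ball x1 e y1) /\ ball x2 e y2 <->
    Rabs (y0 - x0) < e /\ Rabs (y1 - x1) < e /\ Rabs (y2 - x2) < e).
  rewrite !ball_R. tauto.
Qed.

Lemma Rabs_coord_le_norm (h : R3) :
  Rabs (fst (fst h)) <= norm h /\ Rabs (snd (fst h)) <= norm h /\ Rabs (snd h) <= norm h.
Proof.
  pose proof (norm_le_prod_norm_1 h) as H1.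
  pose proof (norm_le_prod_norm_2 h) as H2.
  pose proof (norm_le_prod_norm_1 (fst h)) as H3.
  pose proof (norm_le_prod_norm_2 (fst h)) as H4.
  change (norm (snd h)) with (Rabs (snd h)) in H2.
  change (norm (fst (fst h))) with (Rabs (fst (fst h))) in H3.
  change (norm (snd (fst h))) with (Rabs (snd (fst h))) in H4.
  repeat split; [exact (Rle_trans _ _ _ H3 H1) | exact (Rle_trans _ _ _ H4 H1) | exact H2].
Qed.

Lemma Rabs_between_le (a b s : R) : Rmin a b <= s <= Rmax a b -> Rabs (s - a) <= Rabs (b - a).
Proof.
  intros [H1 H2]. unfold Rmin, Rmax in *. destruct (Rle_dec a b);
  unfold Rabs; repeat destruct Rcase_abs; lra.
Qed.

Lemma MVT_linear_approx (f df : R -> R) (a b eps c0 : R) :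
  (forall s, Rmin a b <= s <= Rmax a b -> is_derive f s (df s)) ->
  (forall s, Rmin a b <= s <= Rmax a b -> Rabs (df s - c0) <= eps) ->
  Rabs (f b - f a - c0 * (b - a)) <= eps * Rabs (b - a).
Proof.
  intros Hd Hb.
  destruct (MVT_gen f a b df) as [c [Hc Heq]].
  - intros s Hs. apply Hd. lra.
  - intros s Hs. apply continuity_pt_filterlim.
    apply (ex_derive_continuous (V := R_NormedModule)). eexists. apply Hd. exact Hs.
  - rewrite Heq. replace (df c * (b - a) - c0 * (b - a)) with ((df c - c0) * (b - a)) by ring.
    rewrite Rabs_mult. apply Rmult_le_compat_r. apply Rabs_pos. apply Hb. exact Hc.
Qed.

Definition dot3 (a0 a1 a2 : R) (h : R3) : R := fst (fst h) * a0 + snd (fst h) * a1 + snd h * a2.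

Lemma is_linear_dot3 (a0 a1 a2 : R) : is_linear (V := R_NormedModule) (dot3 a0 a1 a2).
Proof.
  unfold dot3. split.
  - intros [[x0 x1] x2] [[y0 y1] y2]. unfold plus; simpl. unfold plus; simpl. ring.
  - intros k [[x0 x1] x2]. unfold scal; simpl. unfold scal, mult; simpl. unfold mult; simpl. ring.
  - exists (Rabs a0 + Rabs a1 + Rabs a2 + 1). split.
    + pose proof (Rabs_pos a0); pose proof (Rabs_pos a1); pose proof (Rabs_pos a2); lra.
    + intros [[h0 h1] h2].
      destruct (Rabs_coord_le_norm ((h0, h1), h2)) as [N0 [N1 N2]]. cbn [fst snd] in *.
      change (norm (h0 * a0 + h1 * a1 + h2 * a2)) with (Rabs (h0 * a0 + h1 * a1 + h2 * a2)).
      set (n := norm _) in *.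
      assert (0 <= n) by exact (Rle_trans _ _ _ (Rabs_pos _) N2).
      eapply Rle_trans. apply Rabs_triang. eapply Rle_trans. apply Rplus_le_compat_r. apply Rabs_triang.
      rewrite !Rabs_mult.
      pose proof (Rmult_le_compat_r (Rabs a0) _ _ (Rabs_pos a0) N0).
      pose proof (Rmult_le_compat_r (Rabs a1) _ _ (Rabs_pos a1) N1).
      pose proof (Rmult_le_compat_r (Rabs a2) _ _ (Rabs_pos a2) N2).
      nra.
Qed.

Section FrechetFromPartials.

Variables (v d0 d1 d2 : R3 -> R) (x0 x1 x2 : R) (del : posreal).
Let x : R3 := ((x0, x1), x2).
Hypotheses
  (Hd0 : forall y, ball x del y -> is_derive (fun s => v ((s, snd (fst y)), snd y)) (fst (fst y)) (d0 y))
  (Hd1 : forall y, ball x del y -> is_derive (fun s => v ((fst (fst y), s), snd y)) (snd (fst y)) (d1 y))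
  (Hd2 : forall y, ball x del y -> is_derive (fun s => v ((fst (fst y), snd (fst y)), s)) (snd y) (d2 y)).

(* Move from x to y one coordinate at a time and apply the mean value theorem on each edge. *)
Lemma increment_bound (e r : R) (y0 y1 y2 : R) : 0 < e -> r <= del ->
  (forall z, ball x r z -> Rabs (d0 z - d0 x) < e /\ Rabs (d1 z - d1 x) < e /\ Rabs (d2 z - d2 x) < e) ->
  ball x r ((y0, y1), y2) ->
  Rabs (v ((y0, y1), y2) - v x - dot3 (d0 x) (d1 x) (d2 x) ((y0 - x0, y1 - x1), y2 - x2))
    <= e * (Rabs (y0 - x0) + Rabs (y1 - x1) + Rabs (y2 - x2)).
Proof.
  intros He Hr Hcont Hy. apply ball_R3 in Hy as [B0 [B1 B2]].
  pose proof (cond_pos del).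
  assert (Ball : forall s0 s1 s2, Rabs (s0 - x0) <= Rabs (y0 - x0) -> Rabs (s1 - x1) <= Rabs (y1 - x1) ->
             Rabs (s2 - x2) <= Rabs (y2 - x2) -> ball x r ((s0, s1), s2) /\ ball x del ((s0, s1), s2)).
  { intros s0 s1 s2 S0 S1 S2. unfold x. rewrite !ball_R3. repeat split; lra. }
  assert (Z0 : Rabs (x0 - x0) <= Rabs (y0 - x0)) by (rewrite Rminus_diag, Rabs_R0; apply Rabs_pos).
  assert (Z1 : Rabs (x1 - x1) <= Rabs (y1 - x1)) by (rewrite Rminus_diag, Rabs_R0; apply Rabs_pos).
  assert (Z2 : Rabs (x2 - x2) <= Rabs (y2 - x2)) by (rewrite Rminus_diag, Rabs_R0; apply Rabs_pos).
  assert (A0 : Rabs (v ((y0, y1), y2) - v ((x0, y1), y2) - d0 x * (y0 - x0)) <= e * Rabs (y0 - x0)).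
  { apply (MVT_linear_approx (fun s => v ((s, y1), y2)) (fun s => d0 ((s, y1), y2)));
      intros s Hs; pose proof (Rabs_between_le _ _ _ Hs);
      destruct (Ball s y1 y2) as [Br Bd]; try lra.
    - exact (Hd0 _ Bd).
    - left. apply Hcont, Br. }
  assert (A1 : Rabs (v ((x0, y1), y2) - v ((x0, x1), y2) - d1 x * (y1 - x1)) <= e * Rabs (y1 - x1)).
  { apply (MVT_linear_approx (fun s => v ((x0, s), y2)) (fun s => d1 ((x0, s), y2)));
      intros s Hs; pose proof (Rabs_between_le _ _ _ Hs);
      destruct (Ball x0 s y2) as [Br Bd]; try lra.
    - exact (Hd1 _ Bd).
    - left. apply Hcont, Br. }
  assert (A2 : Rabs (v ((x0, x1), y2) - v ((x0, x1), x2) - d2 x * (y2 - x2)) <= e * Rabs (y2 - x2)).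
  { apply (MVT_linear_approx (fun s => v ((x0, x1), s)) (fun s => d2 ((x0, x1), s)));
      intros s Hs; pose proof (Rabs_between_le _ _ _ Hs);
      destruct (Ball x0 x1 s) as [Br Bd]; try lra.
    - exact (Hd2 _ Bd).
    - left. apply Hcont, Br. }
  unfold dot3; cbn [fst snd].
  replace (v (y0, y1, y2) - v x - ((y0 - x0) * d0 x + (y1 - x1) * d1 x + (y2 - x2) * d2 x))
    with ((v ((y0, y1), y2) - v ((x0, y1), y2) - d0 x * (y0 - x0))
          + (v ((x0, y1), y2) - v ((x0, x1), y2) - d1 x * (y1 - x1))
          + (v ((x0, x1), y2) - v ((x0, x1), x2) - d2 x * (y2 - x2))) by (unfold x; ring).
  eapply Rle_trans. apply Rabs_triang. eapply Rle_trans. apply Rplus_le_compat_r. apply Rabs_triang.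
  unfold x in *. lra.
Qed.

Lemma filterdiff_of_continuous_partials :
  continuous d0 x -> continuous d1 x -> continuous d2 x ->
  filterdiff (V := R_NormedModule) v (locally x) (dot3 (d0 x) (d1 x) (d2 x)).
Proof.
  intros C0 C1 C2. split. apply is_linear_dot3.
  intros x' Hx'.
  pose proof (is_filter_lim_locally_unique (V := prod_NormedModule R_AbsRing
    (prod_NormedModule R_AbsRing R_NormedModule R_NormedModule) R_NormedModule) x x' Hx') as Ex.
  subst x'. intros eps.
  pose proof (cond_pos eps) as Heps.
  assert (He3 : 0 < eps / 3) by lra.
  destruct (proj1 (filterlim_locally _ _) C0 (mkposreal _ He3)) as [e0 E0].
  destruct (proj1 (filterlim_locally _ _) C1 (mkposreal _ He3)) as [e1 E1].
  destruct (proj1 (filterlim_locally _ _) C2 (mkposreal _ He3)) as [e2 E2].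
  assert (Hm : 0 < Rmin del (Rmin e0 (Rmin e1 e2))).
  { destruct del, e0, e1, e2; simpl. repeat apply Rmin_pos; assumption. }
  exists (mkposreal _ Hm). intros [[y0 y1] y2] Hy. simpl in Hy.
  assert (Hcont : forall z, ball x (Rmin del (Rmin e0 (Rmin e1 e2))) z ->
     Rabs (d0 z - d0 x) < eps / 3 /\ Rabs (d1 z - d1 x) < eps / 3 /\ Rabs (d2 z - d2 x) < eps / 3).
  { intros z Hz.
    assert (M : Rmin del (Rmin e0 (Rmin e1 e2)) <= e0 /\ Rmin del (Rmin e0 (Rmin e1 e2)) <= e1 /\
                Rmin del (Rmin e0 (Rmin e1 e2)) <= e2) by (unfold Rmin; repeat destruct Rle_dec; lra).
    rewrite <- !ball_R. repeat split; [apply E0 | apply E1 | apply E2]; eapply ball_le; try exact Hz; lra. }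
  pose proof (increment_bound (eps / 3) _ y0 y1 y2 He3 (Rmin_l _ _) Hcont Hy) as Hb.
  destruct (Rabs_coord_le_norm (minus ((y0, y1), y2) x)) as [N0 [N1 N2]].
  change (norm (minus (minus (v (y0, y1, y2)) (v x))
    (dot3 (d0 x) (d1 x) (d2 x) (minus (y0, y1, y2) x))) <= eps * norm (minus (y0, y1, y2) x)).
  change (minus (y0, y1, y2) x) with (((y0 - x0, y1 - x1), y2 - x2) : R3) in *.
  change (norm (minus (minus (v (y0, y1, y2)) (v x)) ?d)) with (Rabs (v (y0, y1, y2) - v x - d)).
  cbn [fst snd] in N0, N1, N2.
  eapply Rle_trans; [exact Hb |]. set (n := norm _).
  assert (S0 : Rabs (y0 - x0) <= n) by exact N0.
  assert (S1 : Rabs (y1 - x1) <= n) by exact N1.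
  assert (S2 : Rabs (y2 - x2) <= n) by exact N2.
  nra.
Qed.

End FrechetFromPartials.

Lemma is_derive_pair {U V : NormedModule R_AbsRing} (f : R -> U) (g : R -> V) t l1 l2 :
  is_derive f t l1 -> is_derive g t l2 ->
  is_derive (V := prod_NormedModule R_AbsRing U V) (fun t => (f t, g t)) t (l1, l2).
Proof.
  intros Hf Hg. unfold is_derive.
  apply (filterdiff_comp'_2 f g (fun u w => (u, w)) t (fun y => scal y l1) (fun y => scal y l2)
    (fun u w => (u, w)) Hf Hg).
  apply filterdiff_ext_lin with (l1 := fun y => y).
  2: intros [u w]; reflexivity.
  eapply filterdiff_ext. 2: apply filterdiff_id.
  intros [u w]. reflexivity.
Qed.

Definition partialR (v : R3 -> R) (j : nat) (x : R3) : R := Derive (fun t => v (shift x j t)) 0.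

Definition C1_on (U : R3 -> Prop) (v : R3 -> R) : Prop :=
  (forall j x, (j < 3)%nat -> U x -> ex_derive (fun t => v (shift x j t)) 0) /\
  (forall j x, (j < 3)%nat -> U x -> continuous (partialR v j) x).

Definition C2_on (U : R3 -> Prop) (v : R3 -> R) : Prop :=
  C1_on U v /\ forall j, (j < 3)%nat -> C1_on U (partialR v j).

Lemma is_derive_shift (v : R3 -> R) (y : R3) (j : nat) (g : R -> R) (s0 : R) :
  ex_derive (fun t => v (shift y j t)) 0 ->
  (forall t, v (shift y j t) = g (s0 + t)) ->
  is_derive g s0 (partialR v j y).
Proof.
  intros He Hg. apply Derive_correct in He. unfold partialR.
  apply is_derive_ext with (f := fun s => v (shift y j (s - s0))).
  { intros s. rewrite Hg. f_equal. ring. }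
  set (D := Derive _ 0) in *.
  replace D with (scal 1 D) by (unfold scal; simpl; unfold mult; simpl; ring).
  apply (is_derive_comp (fun t => v (shift y j t)) (fun s => s - s0)).
  - replace (s0 - s0) with 0 by ring. exact He.
  - auto_derive; auto; ring.
Qed.

Lemma is_derive_comp_C1 (U : R3 -> Prop) (v : R3 -> R) (a b c : R -> R) (t0 a' b' c' : R) :
  open U -> C1_on U v -> U ((a t0, b t0), c t0) ->
  is_derive a t0 a' -> is_derive b t0 b' -> is_derive c t0 c' ->
  is_derive (fun t => v ((a t, b t), c t)) t0
    (a' * partialR v 0 ((a t0, b t0), c t0) + b' * partialR v 1 ((a t0, b t0), c t0)
     + c' * partialR v 2 ((a t0, b t0), c t0)).
Proof.
  intros HU [He Hc] Hx Ha Hb Hcc.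
  destruct (HU _ Hx) as [del Hdel].
  assert (F : filterdiff (V := R_NormedModule) v (locally ((a t0, b t0), c t0))
      (dot3 (partialR v 0 ((a t0, b t0), c t0)) (partialR v 1 ((a t0, b t0), c t0))
            (partialR v 2 ((a t0, b t0), c t0)))).
  { apply (filterdiff_of_continuous_partials _ _ _ _ _ _ _ del).
    - intros [[y0 y1] y2] Hy. apply (is_derive_shift v _ 0 (fun s => v ((s, y1), y2))).
      + apply He. lia. apply Hdel. exact Hy.
      + reflexivity.
    - intros [[y0 y1] y2] Hy. apply (is_derive_shift v _ 1 (fun s => v ((y0, s), y2))).
      + apply He. lia. apply Hdel. exact Hy.
      + reflexivity.
    - intros [[y0 y1] y2] Hy. apply (is_derive_shift v _ 2 (fun s => v ((y0, y1), s))).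
      + apply He. lia. apply Hdel. exact Hy.
      + reflexivity.
    - apply Hc. lia. exact Hx.
    - apply Hc. lia. exact Hx.
    - apply Hc. lia. exact Hx. }
  pose proof (is_derive_pair _ _ _ _ _ (is_derive_pair _ _ _ _ _ Ha Hb) Hcc) as G.
  unfold is_derive in *.
  eapply filterdiff_ext_lin.
  - exact (filterdiff_comp' _ _ _ _ _ G F).
  - intros y. unfold dot3; simpl. unfold scal; simpl. unfold mult; simpl. ring.
Qed.

Lemma continuous_pair {T U V : UniformSpace} (f : T -> U) (g : T -> V) x :
  continuous f x -> continuous g x -> continuous (fun z => (f z, g z)) x.
Proof.
  intros Hf Hg.
  apply (continuous_comp_2 f g (fun a b => (a, b)) x Hf Hg).
  unfold continuous. eapply filterlim_ext. 2: apply filterlim_id.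
  intros [a b]. reflexivity.
Qed.

Lemma cont2_plus (z : R * R) (f g : R * R -> R) :
  continuous f z -> continuous g z -> continuous (fun w => f w + g w) z.
Proof. intros. apply (continuous_plus f g); auto. Qed.
Lemma cont2_minus (z : R * R) (f g : R * R -> R) :
  continuous f z -> continuous g z -> continuous (fun w => f w - g w) z.
Proof. intros. apply (continuous_minus f g); auto. Qed.
Lemma cont2_mult (z : R * R) (f g : R * R -> R) :
  continuous f z -> continuous g z -> continuous (fun w => f w * g w) z.
Proof. intros. apply (continuous_mult f g); auto. Qed.
Lemma cont2_opp (z : R * R) (f : R * R -> R) : continuous f z -> continuous (fun w => - f w) z.
Proof. intros. apply (continuous_opp f). auto. Qed.
Lemma cont2_const (z : R * R) (c : R) : continuous (fun _ : R * R => c) z.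
Proof. apply continuous_const. Qed.
Lemma cont2_fst (z : R * R) : continuous (fun w => fst w) z.
Proof. destruct z. apply continuous_fst. Qed.
Lemma cont2_snd (z : R * R) : continuous (fun w => snd w) z.
Proof. destruct z. apply continuous_snd. Qed.
Lemma cont2_sin (z : R * R) (f : R * R -> R) : continuous f z -> continuous (fun w => sin (f w)) z.
Proof. intros H. apply (continuous_comp f sin). auto. apply continuous_sin. Qed.
Lemma cont2_cos (z : R * R) (f : R * R -> R) : continuous f z -> continuous (fun w => cos (f w)) z.
Proof. intros H. apply (continuous_comp f cos). auto. apply continuous_cos. Qed.
Lemma cont2_sph (z : R * R) (u : R3 -> R) :
  continuous u (sph (fst z) (snd z)) -> continuous (fun w => u (sph (fst w) (snd w))) z.
Proof.
  intros H. apply (continuous_comp (fun w => sph (fst w) (snd w)) u). 2: exact H.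
  unfold sph. apply continuous_pair. apply continuous_pair.
  - apply cont2_mult. apply cont2_sin, cont2_fst. apply cont2_cos, cont2_snd.
  - apply cont2_mult. apply cont2_sin, cont2_fst. apply cont2_sin, cont2_snd.
  - apply cont2_cos, cont2_fst.
Qed.

Ltac continuity_sph :=
  repeat lazymatch goal with
  | |- continuous (fun w => @?f w + @?g w) _ => apply (cont2_plus _ f g)
  | |- continuous (fun w => @?f w - @?g w) _ => apply (cont2_minus _ f g)
  | |- continuous (fun w => @?f w * @?g w) _ => apply (cont2_mult _ f g)
  | |- continuous (fun w => - @?f w) _ => apply (cont2_opp _ f)
  | |- continuous (fun w => sin (@?f w)) _ => apply (cont2_sin _ f)
  | |- continuous (fun w => cos (@?f w)) _ => apply (cont2_cos _ f)
  | |- continuous (fun w => fst w) _ => apply cont2_fst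
  | |- continuous (fun w => snd w) _ => apply cont2_snd
  | |- continuous (fun w => ?u (sph (fst w) (snd w))) _ => apply (cont2_sph _ u)
  | |- continuous (fun w => ?u (?f (sph (fst w) (snd w)))) _ => apply (cont2_sph _ (fun y => u (f y)))
  | |- continuous (fun w => _) _ => apply cont2_const
  end.

Lemma continuous_section (f : R -> R -> R) (t y : R) :
  continuous (fun z => f (fst z) (snd z)) (t, y) -> continuous (f t) y.
Proof.
  intros H. apply (continuous_comp (fun y => (t, y)) (fun z => f (fst z) (snd z))).
  apply continuous_pair. apply continuous_const. apply continuous_id. exact H.
Qed.

Lemma ex_RInt_section (f : R -> R -> R) (t c d : R) :
  (forall z, continuous (fun z => f (fst z) (snd z)) z) -> ex_RInt (f t) c d.
Proof.
  intros H. apply (ex_RInt_continuous (V := R_CompleteNormedModule)).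
  intros y _. apply continuous_section. apply H.
Qed.

(* Uniform continuity of f on [t - 1, t + 1] x [c, d]. *)
Lemma continuous_RInt_param (f : R -> R -> R) (c d : R) :
  c <= d -> (forall z, continuous (fun z => f (fst z) (snd z)) z) ->
  forall t, continuous (fun t => RInt (f t) c d) t.
Proof.
  intros Hcd Hf t.
  apply filterlim_locally. intros eps.
  pose proof (cond_pos eps) as Heps.
  assert (He : 0 < eps / (d - c + 1)) by (apply Rdiv_lt_0_compat; lra).
  destruct (uniform_continuity_2d f (t - 1) (t + 1) c d) with (eps := mkposreal _ He) as [del Hdel].
  { intros x y _ _. apply continuity_2d_pt_filterlim. apply Hf. }
  assert (Hm : 0 < Rmin del 1) by (apply Rmin_pos; [apply cond_pos | lra]).
  exists (mkposreal _ Hm). intros t' Ht'.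
  assert (Ht : Rabs (t' - t) < Rmin del 1) by (apply ball_R; exact Ht').
  apply ball_R.
  pose proof (Rmin_l del 1). pose proof (Rmin_r del 1). pose proof (cond_pos del).
  change (RInt (f t') c d - RInt (f t) c d) with (minus (RInt (f t') c d) (RInt (f t) c d)).
  rewrite <- RInt_minus by (apply ex_RInt_section; exact Hf).
  eapply Rle_lt_trans.
  - apply (abs_RInt_le_const (fun x => minus (f t' x) (f t x)) c d (eps / (d - c + 1))).
    + exact Hcd.
    + apply (ex_RInt_minus (V := R_NormedModule)); apply ex_RInt_section; exact Hf.
    + intros y Hy. left. unfold minus, plus, opp; simpl.
      apply (Hdel t y t' y); try lra.
      * apply Rabs_def2 in Ht. lra.
      * replace (y - y) with 0 by ring. rewrite Rabs_R0. lra.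
  - replace ((d - c) * (eps / (d - c + 1))) with (eps * ((d - c) / (d - c + 1))) by (field; lra).
    assert ((d - c) / (d - c + 1) < 1).
    { apply Rmult_lt_reg_r with (d - c + 1). lra. unfold Rdiv. rewrite Rmult_assoc, Rinv_l by lra. lra. }
    nra.
Qed.

Definition sphere_intR (h : R3 -> R) : R :=
  RInt (fun th => RInt (fun ph => sin th * h (sph th ph)) 0 (2 * PI)) 0 PI.

Definition sph_continuous (h : R3 -> R) : Prop :=
  forall z : R * R, continuous (fun z => h (sph (fst z) (snd z))) z.

Lemma twoPI_ge0 : 0 <= 2 * PI.
Proof. pose proof PI_RGT_0. lra. Qed.

Lemma continuous_sin_mul_sph (h : R3 -> R) : sph_continuous h ->
  forall z, continuous (fun z : R * R => sin (fst z) * h (sph (fst z) (snd z))) z.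
Proof. intros H z. apply cont2_mult. apply cont2_sin, cont2_fst. apply H. Qed.

Lemma ex_RInt_sphere_inner (h : R3 -> R) th : sph_continuous h ->
  ex_RInt (fun ph => sin th * h (sph th ph)) 0 (2 * PI).
Proof.
  intros H. apply (ex_RInt_section (fun a b => sin a * h (sph a b))).
  apply continuous_sin_mul_sph, H.
Qed.

Lemma ex_RInt_sphere_outer (h : R3 -> R) : sph_continuous h ->
  ex_RInt (fun th => RInt (fun ph => sin th * h (sph th ph)) 0 (2 * PI)) 0 PI.
Proof.
  intros H. apply (ex_RInt_continuous (V := R_CompleteNormedModule)). intros z _.
  apply (continuous_RInt_param (fun a b => sin a * h (sph a b))). apply twoPI_ge0.
  apply continuous_sin_mul_sph, H.
Qed.

Lemma sphere_intR_lin (h1 h2 : R3 -> R) (c : R) : sph_continuous h1 -> sph_continuous h2 ->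
  sphere_intR (fun w => h1 w - c * h2 w) = sphere_intR h1 - c * sphere_intR h2.
Proof.
  intros H1 H2. unfold sphere_intR.
  transitivity (RInt (fun th => minus (RInt (fun ph => sin th * h1 (sph th ph)) 0 (2 * PI))
                   (scal c (RInt (fun ph => sin th * h2 (sph th ph)) 0 (2 * PI)))) 0 PI).
  { apply RInt_ext. intros th _.
    rewrite <- (RInt_scal (V := R_CompleteNormedModule)) by (apply ex_RInt_sphere_inner, H2).
    rewrite <- RInt_minus.
    - apply RInt_ext. intros ph _. unfold minus, plus, opp, scal; simpl. unfold mult; simpl. ring.
    - apply ex_RInt_sphere_inner, H1.
    - apply (ex_RInt_scal (V := R_NormedModule)), ex_RInt_sphere_inner, H2. }
  rewrite (RInt_minus (V := R_CompleteNormedModule)).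
  - rewrite (RInt_scal (V := R_CompleteNormedModule)) by (apply ex_RInt_sphere_outer, H2).
    unfold minus, plus, opp, scal; simpl. unfold mult; simpl. ring.
  - apply ex_RInt_sphere_outer, H1.
  - apply (ex_RInt_scal (V := R_NormedModule)), ex_RInt_sphere_outer, H2.
Qed.

(* The Laplace-Beltrami operator of v at points w of the unit sphere. *)
Definition sph_laplacian (v : R3 -> R) (w : R3) : R :=
  partialR (partialR v 0) 0 w + partialR (partialR v 1) 1 w + partialR (partialR v 2) 2 w
  - (coord w 0 * coord w 0 * partialR (partialR v 0) 0 w
     + coord w 0 * coord w 1 * partialR (partialR v 1) 0 w
     + coord w 0 * coord w 2 * partialR (partialR v 2) 0 w
     + coord w 1 * coord w 0 * partialR (partialR v 0) 1 w
     + coord w 1 * coord w 1 * partialR (partialR v 1) 1 w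
     + coord w 1 * coord w 2 * partialR (partialR v 2) 1 w
     + coord w 2 * coord w 0 * partialR (partialR v 0) 2 w
     + coord w 2 * coord w 1 * partialR (partialR v 1) 2 w
     + coord w 2 * coord w 2 * partialR (partialR v 2) 2 w)
  - 2 * (coord w 0 * partialR v 0 w + coord w 1 * partialR v 1 w + coord w 2 * partialR v 2 w).

Lemma is_derive_sin_mul_frame (G0 G1 G2 : R -> R) (D0 D1 D2 th cp sp : R) :
  is_derive G0 th D0 -> is_derive G1 th D1 -> is_derive G2 th D2 ->
  is_derive (fun t => sin t * (cos t * cp * G0 t + cos t * sp * G1 t - sin t * G2 t)) th
   (cos th * (cos th * cp * G0 th + cos th * sp * G1 th - sin th * G2 th) +
    sin th * (- sin th * cp * G0 th - sin th * sp * G1 th - cos th * G2 th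
              + cos th * cp * D0 + cos th * sp * D1 - sin th * D2)).
Proof.
  intros H0 H1 H2. auto_derive.
  - repeat split; eexists; eassumption.
  - rewrite (is_derive_unique (fun x : R => G0 x) _ _ H0), (is_derive_unique (fun x : R => G1 x) _ _ H1), (is_derive_unique (fun x : R => G2 x) _ _ H2).
    ring.
Qed.

Lemma is_derive_rotation_frame (G0 G1 : R -> R) (D0 D1 s ph : R) :
  is_derive G0 ph D0 -> is_derive G1 ph D1 ->
  is_derive (fun t => - (s * sin t) * G0 t + s * cos t * G1 t) ph
   (- (s * cos ph) * G0 ph - s * sin ph * D0 - s * sin ph * G1 ph + s * cos ph * D1).
Proof.
  intros H0 H1. auto_derive.
  - repeat split; eexists; eassumption.
  - rewrite (is_derive_unique (fun x : R => G0 x) _ _ H0), (is_derive_unique (fun x : R => G1 x) _ _ H1). ring.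
Qed.

Section SphereLaplacian.

Variables (U : R3 -> Prop) (v : R3 -> R).
Hypotheses (HU : open U) (Hsph : forall th ph, U (sph th ph)) (Hv : C2_on U v).

Definition dv (j : nat) (th ph : R) : R := partialR v j (sph th ph).
Definition d2v (j k : nat) (th ph : R) : R := partialR (partialR v j) k (sph th ph).

Definition dtheta_dv (j : nat) (th ph : R) : R :=
  cos th * cos ph * d2v j 0 th ph + cos th * sin ph * d2v j 1 th ph + - sin th * d2v j 2 th ph.
Definition dphi_dv (j : nat) (th ph : R) : R :=
  - (sin th * sin ph) * d2v j 0 th ph + sin th * cos ph * d2v j 1 th ph + 0 * d2v j 2 th ph.

Definition theta_flux (th ph : R) : R :=
  sin th * (cos th * cos ph * dv 0 th ph + cos th * sin ph * dv 1 th ph - sin th * dv 2 th ph).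
Definition dtheta_theta_flux (th ph : R) : R :=
  cos th * (cos th * cos ph * dv 0 th ph + cos th * sin ph * dv 1 th ph - sin th * dv 2 th ph) +
  sin th * (- sin th * cos ph * dv 0 th ph - sin th * sin ph * dv 1 th ph - cos th * dv 2 th ph
            + cos th * cos ph * dtheta_dv 0 th ph + cos th * sin ph * dtheta_dv 1 th ph
            - sin th * dtheta_dv 2 th ph).
Definition dphi_v (th ph : R) : R :=
  - (sin th * sin ph) * dv 0 th ph + sin th * cos ph * dv 1 th ph.
Definition dphi_dphi_v (th ph : R) : R :=
  - (sin th * cos ph) * dv 0 th ph - sin th * sin ph * dphi_dv 0 th ph
  - sin th * sin ph * dv 1 th ph + sin th * cos ph * dphi_dv 1 th ph.

Lemma is_derive_theta_dv j th ph : (j < 3)%nat ->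
  is_derive (fun t => dv j t ph) th (dtheta_dv j th ph).
Proof.
  intros Hj. unfold dv, dtheta_dv, d2v, sph.
  apply (is_derive_comp_C1 U (partialR v j) (fun t => sin t * cos ph) (fun t => sin t * sin ph) cos).
  - exact HU.
  - exact (proj2 Hv j Hj).
  - apply Hsph.
  - auto_derive; auto; ring.
  - auto_derive; auto; ring.
  - auto_derive; auto; ring.
Qed.

Lemma is_derive_phi_dv j th ph : (j < 3)%nat ->
  is_derive (fun t => dv j th t) ph (dphi_dv j th ph).
Proof.
  intros Hj. unfold dv, dphi_dv, d2v, sph.
  apply (is_derive_comp_C1 U (partialR v j) (fun t => sin th * cos t) (fun t => sin th * sin t)
    (fun _ => cos th)).
  - exact HU.
  - exact (proj2 Hv j Hj).
  - apply Hsph.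
  - auto_derive; auto; ring.
  - auto_derive; auto; ring.
  - auto_derive; auto; ring.
Qed.

Lemma is_derive_theta_flux th ph : is_derive (fun t => theta_flux t ph) th (dtheta_theta_flux th ph).
Proof.
  apply (is_derive_sin_mul_frame (fun t => dv 0 t ph) (fun t => dv 1 t ph) (fun t => dv 2 t ph));
    apply is_derive_theta_dv; lia.
Qed.

Lemma is_derive_dphi_v th ph : is_derive (fun t => dphi_v th t) ph (dphi_dphi_v th ph).
Proof.
  apply (is_derive_rotation_frame (fun t => dv 0 th t) (fun t => dv 1 th t));
    apply is_derive_phi_dv; lia.
Qed.

Lemma sph_laplacian_polar th ph :
  sin th * (sin th * sph_laplacian v (sph th ph)) = sin th * dtheta_theta_flux th ph + dphi_dphi_v th ph.
Proof.
  unfold sph_laplacian, dtheta_theta_flux, dphi_dphi_v, dtheta_dv, dphi_dv, dv, d2v. simpl coord.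
  pose proof (sin2_cos2 th) as E1. pose proof (sin2_cos2 ph) as E2.
  unfold Rsqr in E1, E2.
  generalize (partialR v 0 (sph th ph)) (partialR v 1 (sph th ph)) (partialR v 2 (sph th ph)).
  generalize (partialR (partialR v 0) 0 (sph th ph)) (partialR (partialR v 0) 1 (sph th ph))
    (partialR (partialR v 0) 2 (sph th ph)).
  generalize (partialR (partialR v 1) 0 (sph th ph)) (partialR (partialR v 1) 1 (sph th ph))
    (partialR (partialR v 1) 2 (sph th ph)).
  generalize (partialR (partialR v 2) 0 (sph th ph)) (partialR (partialR v 2) 1 (sph th ph))
    (partialR (partialR v 2) 2 (sph th ph)).
  revert E1 E2. generalize (sin th) (cos th) (sin ph) (cos ph).
  intros. nsatz.
Qed.

Lemma continuous_dv_sph j th ph : (j < 3)%nat -> continuous (partialR v j) (sph th ph).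
Proof. intros Hj. apply (proj2 (proj1 Hv)). exact Hj. apply Hsph. Qed.

Lemma continuous_d2v_sph j k th ph : (j < 3)%nat -> (k < 3)%nat ->
  continuous (partialR (partialR v j) k) (sph th ph).
Proof. intros Hj Hk. apply (proj2 (proj2 Hv j Hj)). exact Hk. apply Hsph. Qed.

Ltac continuity_v :=
  continuity_sph;
  lazymatch goal with
  | |- continuous (partialR (partialR _ ?j) ?k) (sph ?a ?b) => apply continuous_d2v_sph; lia
  | |- continuous (partialR _ ?j) (sph ?a ?b) => apply continuous_dv_sph; lia
  end.

Lemma continuous_dtheta_theta_flux z : continuous (fun z => dtheta_theta_flux (fst z) (snd z)) z.
Proof. unfold dtheta_theta_flux, dtheta_dv, dv, d2v. continuity_v. Qed.
Lemma continuous_dphi_dphi_v z : continuous (fun z => dphi_dphi_v (fst z) (snd z)) z.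
Proof. unfold dphi_dphi_v, dphi_dv, dv, d2v. continuity_v. Qed.
Lemma continuous_theta_flux z : continuous (fun z => theta_flux (fst z) (snd z)) z.
Proof. unfold theta_flux, dv. continuity_v. Qed.
Lemma sph_continuous_laplacian : sph_continuous (sph_laplacian v).
Proof. intros z. unfold sph_laplacian. simpl coord. continuity_v. Qed.

Lemma RInt_dphi_dphi_v th : RInt (dphi_dphi_v th) 0 (2 * PI) = 0.
Proof.
  rewrite (is_RInt_unique _ _ _ _ (is_RInt_derive (fun t => dphi_v th t) (dphi_dphi_v th) 0 (2 * PI)
    (fun x _ => is_derive_dphi_v th x)
    (fun x _ => continuous_section dphi_dphi_v th x (continuous_dphi_dphi_v (th, x))))).
  unfold dphi_v, dv, sph. rewrite sin_2PI, cos_2PI, sin_0, cos_0.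
  unfold minus, plus, opp; simpl. ring.
Qed.

Lemma RInt_theta_flux_pole th : sin th = 0 -> RInt (theta_flux th) 0 (2 * PI) = 0.
Proof.
  intros Hs. unfold theta_flux. rewrite Hs.
  rewrite (RInt_ext _ (fun _ => 0)) by (intros; apply Rmult_0_l).
  rewrite RInt_const. unfold scal; simpl; unfold mult; simpl. ring.
Qed.

Lemma RInt_sph_laplacian_parallel th : 0 < th < PI ->
  RInt (fun ph => sin th * sph_laplacian v (sph th ph)) 0 (2 * PI) =
  RInt (dtheta_theta_flux th) 0 (2 * PI).
Proof.
  intros Hth. assert (Hs : 0 < sin th) by (apply sin_gt_0; lra).
  transitivity (RInt (fun ph => plus (dtheta_theta_flux th ph) (scal (/ sin th) (dphi_dphi_v th ph)))
    0 (2 * PI)).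
  { apply RInt_ext. intros ph _. unfold plus, scal; simpl; unfold mult; simpl.
    apply Rmult_eq_reg_l with (sin th); [| lra]. rewrite sph_laplacian_polar. field. lra. }
  rewrite (RInt_plus (V := R_CompleteNormedModule)).
  - rewrite (RInt_scal (V := R_CompleteNormedModule)), RInt_dphi_dphi_v.
    + unfold plus, scal; simpl; unfold mult; simpl. ring.
    + apply (ex_RInt_section dphi_dphi_v), continuous_dphi_dphi_v.
  - apply (ex_RInt_section dtheta_theta_flux), continuous_dtheta_theta_flux.
  - apply (ex_RInt_scal (V := R_NormedModule)).
    apply (ex_RInt_section dphi_dphi_v), continuous_dphi_dphi_v.
Qed.

Lemma is_derive_RInt_theta_flux th :
  is_derive (fun t => RInt (theta_flux t) 0 (2 * PI)) th (RInt (dtheta_theta_flux th) 0 (2 * PI)).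
Proof.
  assert (E : forall u w, Derive (fun z => theta_flux z w) u = dtheta_theta_flux u w).
  { intros u w. apply is_derive_unique, is_derive_theta_flux. }
  rewrite (RInt_ext (dtheta_theta_flux th) (fun t => Derive (fun u => theta_flux u t) th))
    by (intros; rewrite E; reflexivity).
  apply is_derive_RInt_param.
  - apply filter_forall. intros y t _. eexists. apply is_derive_theta_flux.
  - intros t _. apply continuity_2d_pt_filterlim. rewrite E.
    eapply filterlim_ext; [| apply (continuous_dtheta_theta_flux (th, t))].
    intros [u w]. simpl. symmetry. apply E.
  - apply filter_forall. intros y. apply (ex_RInt_section theta_flux), continuous_theta_flux.
Qed.

Theorem sphere_intR_laplacian : sphere_intR (sph_laplacian v) = 0.
Proof.
  pose proof PI_RGT_0 as Hpi. unfold sphere_intR.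
  rewrite (RInt_ext _ (fun th => RInt (dtheta_theta_flux th) 0 (2 * PI))).
  2:{ intros th Hth. rewrite Rmin_left, Rmax_right in Hth by lra.
      apply RInt_sph_laplacian_parallel. exact Hth. }
  rewrite (is_RInt_unique _ _ _ _ (is_RInt_derive (fun t => RInt (theta_flux t) 0 (2 * PI))
     (fun th => RInt (dtheta_theta_flux th) 0 (2 * PI)) 0 PI
     (fun x _ => is_derive_RInt_theta_flux x)
     (fun x _ => continuous_RInt_param dtheta_theta_flux 0 (2 * PI) twoPI_ge0
                   continuous_dtheta_theta_flux x))).
  rewrite !RInt_theta_flux_pole by (apply sin_PI || apply sin_0).
  unfold minus, plus, opp; simpl. ring.
Qed.

End SphereLaplacian.

Record Cprojection (proj : C -> R) : Prop := {
  proj_plus : forall a b, proj (Cplus a b) = proj a + proj b;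
  proj_opp : forall a, proj (Copp a) = - proj a;
  proj_scal : forall r z, proj (Cmult (RtoC r) z) = r * proj z;
  proj_partial : forall f j x, proj (partial f j x) = partialR (fun y => proj (f y)) j x;
  proj_ex_partial : forall f j x, ex_partial f j x -> ex_derive (fun t => proj (f (shift x j t))) 0;
  proj_continuous : forall (f : R3 -> C) x, continuous f x -> continuous (fun y => proj (f y)) x }.

Arguments proj_plus {proj}.
Arguments proj_opp {proj}.
Arguments proj_scal {proj}.
Arguments proj_partial {proj}.
Arguments proj_ex_partial {proj}.
Arguments proj_continuous {proj}.

Lemma Cprojection_Re : Cprojection Re.
Proof.
  split; try reflexivity.
  - intros r z. unfold Re, Cmult, RtoC; simpl. ring.
  - intros f j x [H _]. exact H.
  - intros f x H. apply (continuous_comp f (fun z : C => fst z)). exact H.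
    destruct (f x) as [a b]. apply (continuous_fst (U := R_UniformSpace) (V := R_UniformSpace) a b).
Qed.

Lemma Cprojection_Im : Cprojection Im.
Proof.
  split; try reflexivity.
  - intros r z. unfold Im, Cmult, RtoC; simpl. ring.
  - intros f j x [_ H]. exact H.
  - intros f x H. apply (continuous_comp f (fun z : C => snd z)). exact H.
    destruct (f x) as [a b]. apply (continuous_snd (U := R_UniformSpace) (V := R_UniformSpace) a b).
Qed.

Lemma partialR_proj proj (HP : Cprojection proj) (f : R3 -> C) j :
  partialR (fun y => proj (f y)) j = fun x => proj (partial f j x).
Proof. apply functional_extensionality. intros x. symmetry. apply (proj_partial HP). Qed.

Lemma is_derive_proj_shift proj (HP : Cprojection proj) f j x :
  ex_partial f j x -> is_derive (fun t => proj (f (shift x j t))) 0 (proj (partial f j x)).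
Proof.
  intros H. rewrite (proj_partial HP). apply Derive_correct, (proj_ex_partial HP), H.
Qed.

Definition kronecker (j k : nat) : R := if Nat.eqb j k then 1 else 0.

Lemma coord_shift w j k t : (j < 3)%nat -> (k < 3)%nat ->
  coord (shift w j t) k = coord w k + kronecker j k * t.
Proof.
  intros Hj Hk. destruct w as [[w0 w1] w2]. unfold kronecker.
  destruct j as [|[|[|j]]]; try lia; destruct k as [|[|[|k]]]; try lia; simpl; ring.
Qed.

Lemma shift_0 w j : shift w j 0 = w.
Proof.
  destruct w as [[w0 w1] w2]. destruct j as [|[|j]]; simpl; rewrite Rplus_0_r; reflexivity.
Qed.

Lemma Derive_transport_shape (c0 c1 c2 e0 e1 e2 a : R) (P0 P1 P2 B C0 : R -> R) dP0 dP1 dP2 dB dC :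
  is_derive P0 0 dP0 -> is_derive P1 0 dP1 -> is_derive P2 0 dP2 ->
  is_derive B 0 dB -> is_derive C0 0 dC ->
  Derive (fun t => - ((c0 + e0 * t) * P0 t + (c1 + e1 * t) * P1 t + (c2 + e2 * t) * P2 t)
            - a * B t + C0 t) 0
  = - ((e0 * P0 0 + c0 * dP0) + (e1 * P1 0 + c1 * dP1) + (e2 * P2 0 + c2 * dP2)) - a * dB + dC.
Proof.
  intros H0 H1 H2 HB HC. apply is_derive_unique. auto_derive.
  - repeat split; eexists; eassumption.
  - rewrite (is_derive_unique (fun x : R => P0 x) _ _ H0), (is_derive_unique (fun x : R => P1 x) _ _ H1),
      (is_derive_unique (fun x : R => P2 x) _ _ H2), (is_derive_unique (fun x : R => B x) _ _ HB),
      (is_derive_unique (fun x : R => C0 x) _ _ HC).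
    ring.
Qed.

Lemma proj_partial_Ltilde1 proj (HP : Cprojection proj) p u1 u2 w j : (j < 3)%nat ->
  (forall k, (k < 3)%nat -> ex_partial (partial u1 k) j w) ->
  ex_partial u1 j w -> ex_partial u2 j w ->
  proj (partial (fst (Ltilde p (u1, u2))) j w) =
  - ((kronecker j 0 * proj (partial u1 0 w) + coord w 0 * proj (partial (partial u1 0) j w))
   + (kronecker j 1 * proj (partial u1 1 w) + coord w 1 * proj (partial (partial u1 1) j w))
   + (kronecker j 2 * proj (partial u1 2 w) + coord w 2 * proj (partial (partial u1 2) j w)))
  - 2 / (p - 1) * proj (partial u1 j w) + proj (partial u2 j w).
Proof.
  intros Hj H2 H1 Hu2.
  rewrite (proj_partial HP). unfold partialR.
  rewrite (Derive_ext _ (fun t =>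
     - ((coord w 0 + kronecker j 0 * t) * proj (partial u1 0 (shift w j t))
      + (coord w 1 + kronecker j 1 * t) * proj (partial u1 1 (shift w j t))
      + (coord w 2 + kronecker j 2 * t) * proj (partial u1 2 (shift w j t)))
     - 2 / (p - 1) * proj (u1 (shift w j t)) + proj (u2 (shift w j t)))).
  2:{ intros t. unfold Ltilde, sum3, Cminus. simpl fst.
      rewrite !(proj_plus HP), !(proj_opp HP), !(proj_plus HP), !(proj_scal HP).
      change (fst (fst (shift w j t))) with (coord (shift w j t) 0).
      change (snd (fst (shift w j t))) with (coord (shift w j t) 1).
      change (snd (shift w j t)) with (coord (shift w j t) 2).
      rewrite !coord_shift by lia. ring. }
  rewrite (Derive_transport_shape _ _ _ _ _ _ _ _ _ _ _ _ _ _ _ _ _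
     (is_derive_proj_shift proj HP _ _ _ (H2 0%nat ltac:(lia)))
     (is_derive_proj_shift proj HP _ _ _ (H2 1%nat ltac:(lia)))
     (is_derive_proj_shift proj HP _ _ _ (H2 2%nat ltac:(lia)))
     (is_derive_proj_shift proj HP _ _ _ H1)
     (is_derive_proj_shift proj HP _ _ _ Hu2)).
  rewrite !shift_0. ring.
Qed.

Lemma proj_bdry_Ltilde proj (HP : Cprojection proj) p (hp : p - 1 <> 0) u1 u2 w :
  (forall j, (j < 3)%nat -> ex_partial u1 j w) ->
  (forall j k, (j < 3)%nat -> (k < 3)%nat -> ex_partial (partial u1 k) j w) ->
  (forall j, (j < 3)%nat -> ex_partial u2 j w) ->
  proj (bdry (Ltilde p (u1, u2)) w) =
  sph_laplacian (fun y => proj (u1 y)) w - 2 / (p - 1) * proj (bdry (u1, u2) w).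
Proof.
  intros H1 H2 H3.
  unfold bdry, sum3.
  rewrite !(proj_plus HP), !(proj_scal HP).
  rewrite (proj_partial_Ltilde1 proj HP p u1 u2 w 0) by (auto; lia).
  rewrite (proj_partial_Ltilde1 proj HP p u1 u2 w 1) by (auto; lia).
  rewrite (proj_partial_Ltilde1 proj HP p u1 u2 w 2) by (auto; lia).
  unfold Ltilde. cbn [fst snd].
  unfold sum3, Cminus. rewrite !(proj_plus HP), !(proj_opp HP), !(proj_scal HP).
  unfold sph_laplacian. rewrite !(partialR_proj proj HP). cbv beta.
  cbn [kronecker Nat.eqb].
  rewrite !(proj_plus HP), !(proj_scal HP). field. exact hp.
Qed.

Lemma RInt_C_components (f : R -> C) a b :
  ex_RInt (fun t => fst (f t)) a b -> ex_RInt (fun t => snd (f t)) a b ->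
  RInt (V := C_R_CompleteNormedModule) f a b =
  (RInt (fun t => fst (f t)) a b, RInt (fun t => snd (f t)) a b).
Proof.
  intros H1 H2. symmetry.
  apply (RInt_fct_extend_pair (@RInt R_CompleteNormedModule) (@RInt R_CompleteNormedModule)).
  - intros; apply is_RInt_unique; auto.
  - intros; apply is_RInt_unique; auto.
  - apply (RInt_correct (V := C_R_CompleteNormedModule)).
    apply (ex_RInt_fct_extend_pair f a b H1 H2).
Qed.

Lemma sphere_int_components (g : R3 -> C) :
  sph_continuous (fun w => Re (g w)) -> sph_continuous (fun w => Im (g w)) ->
  sphere_int g = (sphere_intR (fun w => Re (g w)), sphere_intR (fun w => Im (g w))).
Proof.
  intros Hr Hi. unfold sphere_int, sphere_intR.
  rewrite (RInt_ext (V := C_R_CompleteNormedModule) _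
    (fun th => (RInt (fun ph => sin th * Re (g (sph th ph))) 0 (2 * PI),
                RInt (fun ph => sin th * Im (g (sph th ph))) 0 (2 * PI)))).
  2:{ intros th _. rewrite RInt_C_components.
      - f_equal; apply RInt_ext; intros ph _; unfold Cmult, RtoC, Re, Im; cbn [fst snd]; lazymatch goal with |- ?a = ?b => change (@eq R a b) end; ring.
      - apply (ex_RInt_ext (fun ph => sin th * Re (g (sph th ph)))).
        + intros ph _. unfold Cmult, RtoC, Re, Im; cbn [fst snd]; lazymatch goal with |- ?a = ?b => change (@eq R a b) end; ring.
        + exact (ex_RInt_sphere_inner (fun w => Re (g w)) th Hr).
      - apply (ex_RInt_ext (fun ph => sin th * Im (g (sph th ph)))).
        + intros ph _. unfold Cmult, RtoC, Re, Im; cbn [fst snd]; lazymatch goal with |- ?a = ?b => change (@eq R a b) end; ring.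
        + exact (ex_RInt_sphere_inner (fun w => Im (g w)) th Hi). }
  rewrite RInt_C_components; cbn [fst snd]; [reflexivity | |].
  - exact (ex_RInt_sphere_outer (fun w => Re (g w)) Hr).
  - exact (ex_RInt_sphere_outer (fun w => Im (g w)) Hi).
Qed.

Lemma sphere_intR_ext (h1 h2 : R3 -> R) :
  (forall th ph, h1 (sph th ph) = h2 (sph th ph)) -> sphere_intR h1 = sphere_intR h2.
Proof.
  intros H. unfold sphere_intR.
  apply RInt_ext. intros th _. apply RInt_ext. intros ph _. rewrite H. reflexivity.
Qed.

Lemma sph_continuous_ext (h1 h2 : R3 -> R) :
  (forall th ph, h1 (sph th ph) = h2 (sph th ph)) -> sph_continuous h1 -> sph_continuous h2.
Proof.
  intros H H1 z. unfold continuous. rewrite <- H.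
  eapply filterlim_ext; [intros w; apply H | apply H1].
Qed.

Lemma cball_sph th ph : cball (sph th ph).
Proof.
  unfold cball, sph; simpl.
  pose proof (sin2_cos2 th) as E1. pose proof (sin2_cos2 ph) as E2. unfold Rsqr in E1, E2.
  right.
  replace ((sin th * cos ph) * ((sin th * cos ph) * 1) + (sin th * sin ph) * ((sin th * sin ph) * 1)
           + cos th * (cos th * 1))
    with (sin th * sin th * (sin ph * sin ph + cos ph * cos ph) + cos th * cos th) by ring.
  rewrite E2. lra.
Qed.

Section Boundary.

Variables (p : R) (u1 u2 : R3 -> C) (U1 U2 : R3 -> Prop).
Hypotheses (hp : p - 1 <> 0) (HU1 : open U1)
  (Hb1 : forall x, cball x -> U1 x) (Hu1 : Ck 3 U1 u1)
  (Hb2 : forall x, cball x -> U2 x) (Hu2 : Ck 2 U2 u2).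

Lemma C2_on_proj proj (HP : Cprojection proj) : C2_on U1 (fun y => proj (u1 y)).
Proof.
  destruct Hu1 as [_ [He1 Hk]]. split.
  - split.
    + intros j x Hj Hx. apply (proj_ex_partial HP), He1; assumption.
    + intros j x Hj Hx. rewrite (partialR_proj proj HP). apply (proj_continuous HP).
      destruct (Hk j Hj) as [C2 _]. apply C2, Hx.
  - intros j Hj. destruct (Hk j Hj) as [_ [E2 Hk2]]. split.
    + intros k x Hk' Hx. rewrite (partialR_proj proj HP). apply (proj_ex_partial HP), E2; assumption.
    + intros k x Hk' Hx. rewrite !(partialR_proj proj HP). apply (proj_continuous HP).
      destruct (Hk2 k Hk') as [C3 _]. apply C3, Hx.
Qed.

Lemma sph_continuous_proj_bdry proj (HP : Cprojection proj) :
  sph_continuous (fun w => proj (bdry (u1, u2) w)).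
Proof.
  destruct Hu1 as [Hc1 [_ Hk1]]. destruct Hu2 as [Hc2 _].
  assert (Hd : forall j th ph, (j < 3)%nat -> continuous (fun y => proj (partial u1 j y)) (sph th ph)).
  { intros j th ph Hj. apply (proj_continuous HP). destruct (Hk1 j Hj) as [C _]. apply C, Hb1, cball_sph. }
  apply (sph_continuous_ext (fun w => coord w 0 * proj (partial u1 0 w) + coord w 1 * proj (partial u1 1 w)
    + coord w 2 * proj (partial u1 2 w) + proj (u1 w) + proj (u2 w))).
  { intros th ph. unfold bdry, sum3. cbn [fst snd].
    rewrite !(proj_plus HP), !(proj_scal HP). reflexivity. }
  intros z. simpl coord. continuity_sph.
  - apply Hd; lia.
  - apply Hd; lia.
  - apply Hd; lia.
  - apply (proj_continuous HP), Hc1, Hb1, cball_sph.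
  - apply (proj_continuous HP), Hc2, Hb2, cball_sph.
Qed.

Lemma sph_proj_bdry_Ltilde proj (HP : Cprojection proj) th ph :
  proj (bdry (Ltilde p (u1, u2)) (sph th ph)) =
  sph_laplacian (fun y => proj (u1 y)) (sph th ph) - 2 / (p - 1) * proj (bdry (u1, u2) (sph th ph)).
Proof.
  destruct Hu1 as [_ [He1 Hk1]]. destruct Hu2 as [_ [He2 _]].
  apply (proj_bdry_Ltilde proj HP p hp).
  - intros j Hj. apply He1. exact Hj. apply Hb1, cball_sph.
  - intros j k Hj Hk. destruct (Hk1 k Hk) as [_ [E _]]. apply E. exact Hj. apply Hb1, cball_sph.
  - intros j Hj. apply He2. exact Hj. apply Hb2, cball_sph.
Qed.

Lemma sph_continuous_proj_bdry_Ltilde proj (HP : Cprojection proj) :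
  sph_continuous (fun w => proj (bdry (Ltilde p (u1, u2)) w)).
Proof.
  apply (sph_continuous_ext (fun w => sph_laplacian (fun y => proj (u1 y)) w
                                      - 2 / (p - 1) * proj (bdry (u1, u2) w))).
  - intros th ph. symmetry. apply sph_proj_bdry_Ltilde, HP.
  - intros z. apply cont2_minus.
    + apply (sph_continuous_laplacian U1), C2_on_proj, HP.
      intros th ph. apply Hb1, cball_sph.
    + apply cont2_mult. apply cont2_const. apply sph_continuous_proj_bdry, HP.
Qed.

Lemma sphere_intR_proj_bdry_Ltilde proj (HP : Cprojection proj) :
  sphere_intR (fun w => proj (bdry (Ltilde p (u1, u2)) w)) =
  - (2 / (p - 1)) * sphere_intR (fun w => proj (bdry (u1, u2) w)).
Proof.
  assert (Hsph : forall th ph, U1 (sph th ph)) by (intros; apply Hb1, cball_sph).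
  rewrite (sphere_intR_ext _ (fun w => sph_laplacian (fun y => proj (u1 y)) w
                                      - 2 / (p - 1) * proj (bdry (u1, u2) w)))
    by (intros; apply sph_proj_bdry_Ltilde, HP).
  rewrite sphere_intR_lin.
  - rewrite (sphere_intR_laplacian U1 _ HU1 Hsph (C2_on_proj proj HP)). ring.
  - exact (sph_continuous_laplacian U1 _ Hsph (C2_on_proj proj HP)).
  - apply sph_continuous_proj_bdry, HP.
Qed.

Lemma sphere_int_bdry_Ltilde :
  sphere_int (bdry (Ltilde p (u1, u2))) =
  Cmult (RtoC (- (2 / (p - 1)))) (sphere_int (bdry (u1, u2))).
Proof.
  rewrite !sphere_int_components;
    try apply sph_continuous_proj_bdry_Ltilde; try apply sph_continuous_proj_bdry;
    try apply Cprojection_Re; try apply Cprojection_Im.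
  rewrite !sphere_intR_proj_bdry_Ltilde by (apply Cprojection_Re || apply Cprojection_Im).
  unfold Cmult, RtoC; simpl. f_equal; ring.
Qed.

End Boundary.

Theorem lemma3p2 (p : R) (hp : 3 < p) (u1 u2 : R3 -> C) :
  Ck_cball 3 u1 -> Ck_cball 2 u2 ->
  Re (ip3 (Ltilde p (u1, u2)) (u1, u2)) <= - (2 / (p - 1)) * Re (ip3 (u1, u2) (u1, u2)).
Proof.
  intros [U1 [HU1 [Hb1 Hk1]]] [U2 [_ [Hb2 Hk2]]].
  unfold ip3. rewrite (sphere_int_bdry_Ltilde p u1 u2 U1 U2) by (auto; lra).
  unfold Re, Cmult, Cconj, RtoC; simpl. right. ring.
Qed.
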